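(* Let $g_1,g_2$ be monic divisors of $x^m-1$, $v_1,v_2\in\mathcal{R}$ with $\gcd(v_1v_2-1,x^m-1)=1$, and let $\mathcal{C}$ be the QC code of length $2m$ generated by $(g_1,v_1g_1)$ and $(v_2g_2,g_2)$. Then: (A) over $\mathbb{F}_q$, the Euclidean dual $\mathcal{C}^{\perp_E}$ is the QC code generated by $(g_1^{\perp},-\overline{v_2}g_1^{\perp})$ and $(-\overline{v_1}g_2^{\perp},g_2^{\perp})$; (B) over $\mathbb{F}_{q^2}$, the Hermitian dual $\mathcal{C}^{\perp_H}$ is the QC code generated by $(g_1^{\perp_H},-\overline{v_2}^{[q]}g_1^{\perp_H})$ and $(-\overline{v_1}^{[q]}g_2^{\perp_H},g_2^{\perp_H})$; (C) over $\mathbb{F}_q$, the symplectic dual $\mathcal{C}^{\perp_S}$ is the QC code generated by $(g_2^{\perp},\overline{v_1}g_2^{\perp})$ and $(\overline{v_2}g_1^{\perp},g_1^{\perp})$.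
   Context: $q$ a prime power; $\mathcal{R}=\mathbb{F}[x]/(x^m-1)$ with $\mathbb{F}$ as indicated; elements identified with representatives of degree $<m$; $[k]=(k_0,\dots,k_{m-1})$; $\overline{k}(x)=k(x^{-1})\bmod(x^m-1)$; $k^{[q]}=\sum k_i^qx^i$; for a nonzero polynomial $f$, $f^*(x)=x^{\deg f}f(1/x)$; for $k\in\mathcal{R}$, with $f=\frac{x^m-1}{\gcd(k,x^m-1)}$, $k^{\perp}=f(0)^{-1}f^*$, and $k^{\perp_H}=(k^{[q]})^{\perp}$. The QC code generated by $(u_{i1},u_{i2})$, $i=1,2$, is $\{([r_1u_{11}+r_2u_{21}],[r_1u_{12}+r_2u_{22}]):r_1,r_2\in\mathcal{R}\}\subseteq\mathbb{F}^{2m}$. Inner products: Euclidean $\sum u_iv_i$; Hermitian $\sum u_i^qv_i$; symplectic on $\mathbb{F}^{2m}$: $\sum_{i=1}^m(u_iv_{m+i}-u_{m+i}v_i)$; duals are the orthogonal complements w.r.t. these forms. *)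

From mathcomp Require Import all_boot all_order all_algebra all_field.
Set Implicit Arguments. Unset Strict Implicit. Unset Printing Implicit Defensive.
Import GRing.Theory.
Local Open Scope ring_scope.

(* R = F[x]/(x^m - 1): elements are polynomials, reduced modulo x^m - 1. *)
Section QC.
Variables (F : fieldType) (m : nat).

Definition xm1 : {poly F} := 'X^m - 1.

Definition modR (k : {poly F}) : {poly F} := k %% xm1.

Definition vecR (k : {poly F}) : 'rV[F]_m := \row_(i < m) (modR k)`_i.

(* kbar(x) = k(x^{-1}) mod (x^m - 1) *)
Definition barR (k : {poly F}) : {poly F} :=
  modR (\sum_(i < m) (modR k)`_i *: 'X^((m - i) %% m)).

Definition frobR (q : nat) (k : {poly F}) : {poly F} :=
  map_poly (fun c => c ^+ q) (modR k).

Definition recip (f : {poly F}) : {poly F} :=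
  \poly_(i < size f) f`_(size f - 1 - i).

Definition perpR (k : {poly F}) : {poly F} :=
  let f := xm1 %/ gcdp (modR k) xm1 in (f.[0])^-1 *: recip f.

Definition perpHR (q : nat) (k : {poly F}) : {poly F} := perpR (frobR q k).

(* vectors of F^{2m}, written as ([a],[b]) with a the first m coordinates *)
Definition word := ('rV[F]_m * 'rV[F]_m)%type.

Definition QCcode (u11 u12 u21 u22 : {poly F}) (c : word) : Prop :=
  exists r1 r2 : {poly F},
    c = (vecR (r1 * u11 + r2 * u21), vecR (r1 * u12 + r2 * u22)).

Definition formE (u v : word) : F :=
  \sum_(i < m) (u.1 0 i * v.1 0 i) + \sum_(i < m) (u.2 0 i * v.2 0 i).

Definition formH (q : nat) (u v : word) : F :=
  \sum_(i < m) (u.1 0 i ^+ q * v.1 0 i) + \sum_(i < m) (u.2 0 i ^+ q * v.2 0 i).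

Definition formS (u v : word) : F :=
  \sum_(i < m) (u.1 0 i * v.2 0 i - u.2 0 i * v.1 0 i).

Definition dual (b : word -> word -> F) (C : word -> Prop) (v : word) : Prop :=
  forall u, C u -> b u v = 0.

End QC.

(* Work in R = F[x]/(x^m - 1) with the involution k |-> kbar induced by
   x |-> x^(m-1) = x^(-1).  The Euclidean form of ([a1],[a2]) and ([b1],[b2])
   is the constant coefficient of a1 b1bar + a2 b2bar, and "constant
   coefficient of r z vanishes for every r" forces z = 0.  Hence ([w1],[w2]) is
   in the dual iff g1 (w1bar + v1 w2bar) = 0 and g2 (v2 w1bar + w2bar) = 0 in R.
   For h = (x^m - 1)/g, the annihilator of g is h R, hbar is a multiple of
   g^perp and g (g^perp)bar = 0; as v1 v2 - 1 is a unit, the two conditions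
   can be solved for w1bar and w2bar, which gives (A).  The symplectic form is
   the Euclidean one after ([c1],[c2]) |-> ([c2],-[c1]), giving (C); the
   Hermitian form is the Euclidean one after applying c |-> c^q coefficientwise
   to the first argument, an involutive field automorphism when |F| = q^2,
   giving (B). *)

From HB Require Import structures.
From mathcomp Require Import all_boot all_order all_algebra all_field.
From mathcomp Require Import ring.
Import GRing.Theory.
Local Open Scope ring_scope.
Set Implicit Arguments. Unset Strict Implicit. Unset Printing Implicit Defensive.

Lemma poly_sum_coefs (R : nzSemiRingType) n (p : {poly R}) :
  (size p <= n)%N -> p = \sum_(i < n) p`_i *: 'X^i.
Proof.
move=> le_p_n; rewrite -poly_def; apply/polyP => j; rewrite coef_poly.
by case: ltnP => // le_n_j; rewrite nth_default // (leq_trans le_p_n).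
Qed.

Lemma recipZ (F : fieldType) (c : F) (p : {poly F}) :
  c != 0 -> recip (c *: p) = c *: recip p.
Proof.
move=> c_neq0; rewrite /recip size_scale //; apply/polyP => i.
by rewrite coefZ !coef_poly coefZ; case: ifP; rewrite ?mulr0.
Qed.

Lemma mod_add_mulpred_eq0 m i j : (i < m)%N -> (j < m)%N ->
  ((i + m.-1 * j) %% m == 0)%N = (i == j).
Proof.
case: m => // n lt_i lt_j /=.
rewrite -[0%N](mod0n n.+1) -(eqn_modDr j) add0n -addnA -mulSnr mulnC addnC.
by rewrite modnMDl !modn_small.
Qed.

Lemma pnat_pchar_card_sqr (F : finFieldType) (q : nat) :
  #|F| = (q ^ 2)%N -> [pchar F].-nat q.
Proof.
move=> cardF; have [p p_prime pcharFp] := finPcharP F.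
have : (q %| p ^ logn p #|F|)%N by rewrite -(card_pprimeChar pcharFp) cardF dvdn_exp.
case/(dvdn_pfactor _ _ p_prime) => k _ ->.
by rewrite pnatX (eq_pnat _ (pcharf_eq pcharFp)) pnat_id.
Qed.

Section Frobenius.
Variables (F : finFieldType) (q : nat).
Hypothesis cardF : #|F| = (q ^ 2)%N.

Definition frobq (c : F) := c ^+ q.

Fact frobq_is_zmod_morphism : zmod_morphism frobq.
Proof.
by move=> a b; rewrite /frobq exprDn_pchar ?exprNn_pchar // pnat_pchar_card_sqr.
Qed.

Fact frobq_is_monoid_morphism : monoid_morphism frobq.
Proof. by split=> [|a b]; rewrite /frobq ?expr1n ?exprMn. Qed.

Definition frobq_rmorphism : {rmorphism F -> F} :=
  HB.pack frobq (GRing.isZmodMorphism.Build _ _ _ frobq_is_zmod_morphism)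
                (GRing.isMonoidMorphism.Build _ _ _ frobq_is_monoid_morphism).

Lemma frobqK : involutive frobq.
Proof. by move=> c; rewrite /frobq -exprM mulnn -cardF expf_card. Qed.

End Frobenius.

Section QuotientRing.
Variables (F : fieldType) (m : nat).
Hypothesis m_gt0 : (0 < m)%N.

Local Notation xm := (xm1 F m).
Local Notation Q := {poly %/ xm}.
Local Notation qp := (in_qpoly xm).
(* k(x^(m-1)) = k(x^(-1)) modulo x^m - 1 *)
Local Notation bar := (comp_poly 'X^(m.-1)).
Implicit Types p r : {poly F}.

Lemma size_xm1 : size xm = m.+1.
Proof. by rewrite /xm1 size_Xn_sub_1. Qed.

Lemma monic_xm1 : xm \is monic.
Proof. exact: monicXnsubC. Qed.

Lemma mk_monic_xm1 : mk_monic xm = xm.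
Proof. by rewrite /mk_monic size_xm1 monic_xm1 ltnS m_gt0. Qed.

Lemma qpE p : (qp p : {poly F}) = modR m p.
Proof.
by rewrite /in_qpoly /= mk_monic_xm1 /modR (Pdiv.IdomainMonic.modpE monic_xm1).
Qed.

Lemma size_qpoly (x : Q) : (size (x : {poly F}) <= m)%N.
Proof. by rewrite -ltnS -size_xm1 -{2}mk_monic_xm1 size_mk_monic. Qed.

Lemma qp_val (x : Q) : qp x = x.
Proof.
by apply/val_inj; rewrite [LHS]qpE /modR modp_small // size_xm1 ltnS size_qpoly.
Qed.

Lemma eq_modR_qp p p' : qp p = qp p' -> modR m p = modR m p'.
Proof. by rewrite -!qpE => ->. Qed.

Lemma qp_modR p : qp (modR m p) = qp p.
Proof. by apply/val_inj; rewrite [LHS]qpE [RHS]qpE /modR modp_id. Qed.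

Lemma size_modR p : (size (modR m p) <= m)%N.
Proof. by rewrite -qpE size_qpoly. Qed.

Lemma qp_xm1 : qp xm = 0.
Proof. by apply/val_inj; rewrite [LHS]qpE /modR modpp. Qed.

Lemma qp_Xn_mod n : qp 'X^n = qp 'X^(n %% m).
Proof.
have qp_Xm : qp 'X^m = 1 by rewrite -(subrK 1 'X^m) rmorphD /= qp_xm1 add0r rmorph1.
by rewrite {1}(divn_eq n m) exprD mulnC exprM rmorphM rmorphXn /= qp_Xm expr1n mul1r.
Qed.

Lemma coef_qp_Xn n j : (qp 'X^n : {poly F})`_j = (j == n %% m)%N%:R.
Proof.
by rewrite qp_Xn_mod qpE /modR modp_small ?coefXn // size_xm1 size_polyXn ltnS ltn_pmod.
Qed.

Lemma qp_sum_coefs (x : Q) : x = \sum_(i < m) (x : {poly F})`_i *: qp 'X^i.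
Proof.
rewrite -{1}[x]qp_val {1}(poly_sum_coefs (size_qpoly x)) linear_sum.
by under eq_bigr do rewrite linearZ.
Qed.

Lemma qp_unit_coprime p : coprimep p xm -> qp p \is a GRing.unit.
Proof.
move=> cop; have cop' : coprimep (mk_monic xm) (qp p).
  by rewrite qpE mk_monic_xm1 /modR coprimep_modr coprimep_sym.
by apply/unitrP; exists (qpoly_inv (qp p)); rewrite qpoly_mulVz // qpoly_mulzV.
Qed.

Lemma qp_Xn_eq a b : a = b %[mod m] -> qp 'X^a = qp 'X^b.
Proof. by rewrite qp_Xn_mod => ->; rewrite -qp_Xn_mod. Qed.

Lemma qp_comp p r : qp (p \Po r) = \sum_(k < size p) p`_k *: qp r ^+ k.
Proof. by rewrite comp_polyE linear_sum; under eq_bigr do rewrite linearZ rmorphXn. Qed.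

Lemma qp_comp_congr p r r' : qp r = qp r' -> qp (p \Po r) = qp (p \Po r').
Proof. by rewrite !qp_comp => ->. Qed.

Lemma qp_bar_xm1 : qp (bar xm) = 0.
Proof.
rewrite rmorphB rmorph1 /= comp_Xn_poly -exprM rmorphB /= qp_Xn_mod modnMl.
by rewrite rmorph1 subrr.
Qed.

Lemma qp_bar_congr p p' : qp p = qp p' -> qp (bar p) = qp (bar p').
Proof.
move/eq_modR_qp; rewrite /modR => e.
by rewrite (divp_eq p xm) (divp_eq p' xm) e !rmorphD !rmorphM /= qp_bar_xm1 !mulr0 !add0r.
Qed.

Definition qbar_fun (x : Q) : Q := qp (bar x).

Lemma qbar_funE p : qbar_fun (qp p) = qp (bar p).
Proof. by apply: qp_bar_congr; rewrite qp_val. Qed.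

Fact qbar_is_zmod_morphism : zmod_morphism qbar_fun.
Proof.
move=> x y; have -> : x - y = qp ((x : {poly F}) - y) by rewrite rmorphB /= !qp_val.
by rewrite qbar_funE !rmorphB.
Qed.

Fact qbar_is_monoid_morphism : monoid_morphism qbar_fun.
Proof.
split; first by rewrite -(rmorph1 qp) qbar_funE !rmorph1.
move=> x y; have -> : x * y = qp ((x : {poly F}) * y) by rewrite rmorphM /= !qp_val.
by rewrite qbar_funE !rmorphM.
Qed.

Definition qbar : {rmorphism Q -> Q} :=
  HB.pack qbar_fun (GRing.isZmodMorphism.Build _ _ _ qbar_is_zmod_morphism)
                   (GRing.isMonoidMorphism.Build _ _ _ qbar_is_monoid_morphism).

Lemma qbar_qp p : qbar (qp p) = qp (bar p).
Proof. exact: qbar_funE. Qed.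

Lemma qbarZ c (x : Q) : qbar (c *: x) = c *: qbar x.
Proof.
have -> : c *: x = qp (c *: (x : {poly F})) by rewrite linearZ /= qp_val.
by rewrite qbar_qp -{2}[x]qp_val qbar_qp comp_polyZ linearZ.
Qed.

Lemma qbar_qp_Xn n : qbar (qp 'X^n) = qp 'X^(m.-1 * n).
Proof. by rewrite qbar_qp comp_Xn_poly -exprM. Qed.

Lemma qbarK : involutive qbar.
Proof.
move=> x; rewrite -[x]qp_val !qbar_qp -comp_polyA comp_Xn_poly -exprM.
rewrite (@qp_comp_congr _ _ 'X) ?comp_polyXr // -['X]expr1; apply: qp_Xn_eq.
case: m m_gt0 => // n _ /=; apply/eqP.
by rewrite -(eqn_modDr n) -mulSnr modnMr add1n modnn.
Qed.

Lemma qp_barR p : qp (barR m p) = qbar (qp p).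
Proof.
rewrite /barR qp_modR -[in RHS]qp_modR qbar_qp [in RHS](poly_sum_coefs (size_modR p)).
rewrite rmorph_sum !linear_sum; apply: eq_bigr => i _.
rewrite !linearZ /= comp_Xn_poly -exprM in_qpolyZ; congr (_ *: _); apply: qp_Xn_eq.
case: m m_gt0 i => // n _ [i /= lt_i]; rewrite modn_mod; apply/eqP.
by rewrite -(eqn_modDr i) (subnK (ltnW lt_i)) -mulSnr modnMr modnn.
Qed.

Lemma coef0_monomial_mul_qbar c d (i j : 'I_m) :
  (((c *: qp 'X^i) * qbar (d *: qp 'X^j) : Q) : {poly F})`_0 = c * d * (i == j)%:R.
Proof.
rewrite qbarZ qbar_qp_Xn -scalerAl -scalerAr scalerA -rmorphM -exprD.
by rewrite poly_of_qpolyZ coefZ coef_qp_Xn eq_sym mod_add_mulpred_eq0.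
Qed.

Lemma coef0_mul_qbar (x y : Q) :
  ((x * qbar y : Q) : {poly F})`_0 = \sum_(j < m) (x : {poly F})`_j * (y : {poly F})`_j.
Proof.
rewrite {1}[x]qp_sum_coefs {1}[y]qp_sum_coefs rmorph_sum big_distrl.
rewrite poly_of_qpoly_sum coef_sum; apply: eq_bigr => i _.
rewrite big_distrr poly_of_qpoly_sum coef_sum (bigD1 i) //= big1 => [|j ne_ji].
  by rewrite coef0_monomial_mul_qbar eqxx mulr1 addr0.
by rewrite coef0_monomial_mul_qbar eq_sym (negbTE ne_ji) mulr0.
Qed.

Lemma coef0_mul_eq0 (z : Q) : (forall r : Q, ((r * z : Q) : {poly F})`_0 = 0) -> z = 0.
Proof.
move=> rz0; rewrite -[z]qbarK; suff -> : qbar z = 0 by rewrite rmorph0.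
apply/val_inj/polyP => j; rewrite coef0.
have [lt_jm | le_mj] := ltnP j m; last first.
  by rewrite nth_default // (leq_trans (size_qpoly _)).
have := rz0 (qp 'X^j); rewrite -{1}[z]qbarK coef0_mul_qbar (bigD1 (Ordinal lt_jm)) //=.
rewrite coef_qp_Xn modn_small // eqxx mul1r big1 ?addr0 // => l ne_lj.
by rewrite coef_qp_Xn modn_small // (negbTE (ne_lj : l != j :> nat)) mul0r.
Qed.

Lemma qp_recip p : p != 0 -> qp (recip p) = qp 'X^((size p).-1) * qbar (qp p).
Proof.
move=> p_neq0; set d := (size p).-1.
have size_p : size p = d.+1 by rewrite prednK // size_poly_gt0.
rewrite qbar_qp -rmorphM comp_polyE size_p /recip size_p poly_def big_distrr !raddf_sum.
rewrite (reindex_inj rev_ord_inj); apply: eq_bigr => [[i lt_id]] _ /=.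
rewrite !subSS subn0 subKn // -scalerAr !linearZ /=; congr (_ *: _).
rewrite -exprM -exprD; apply: qp_Xn_eq.
case: m m_gt0 => // n _ /=; apply/eqP.
by rewrite -(eqn_modDr i) subnK // -addnA -mulSnr -modnDmr modnMr addn0.
Qed.

Section Cofactor.
Variable g : {poly F}.
Hypotheses (g_monic : g \is monic) (g_dvd : g %| xm).
Local Notation h := (xm %/ g).

Lemma qp_mul_eq0_cofactor (x : Q) : qp g * x = 0 -> exists s : Q, x = qp h * s.
Proof.
move=> gx0; have : xm %| g * x.
  by apply/modp_eq0P; rewrite -/(modR m _) -qpE in_qpolyM qp_val gx0.
rewrite -{1}(divpK g_dvd) mulrC dvdp_mul2l ?monic_neq0 // => dvd_h_x.
by exists (qp (x %/ h)); rewrite -{1}[x]qp_val -{1}(divpK dvd_h_x) rmorphM mulrC.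
Qed.

Lemma cofactor_horner0_neq0 : h.[0] != 0.
Proof.
apply/eqP => h0; have : xm.[0] = 0 by rewrite -(divpK g_dvd) hornerM h0 mul0r.
rewrite /xm1 !hornerE expr0n eqn0Ngt m_gt0 /= sub0r => /eqP.
by rewrite oppr_eq0 oner_eq0.
Qed.

Lemma perpR_cofactor : perpR m g = (h.[0])^-1 *: recip h.
Proof.
have : xm %/ gcdp (modR m g) xm %= h.
  by apply: eqp_divr; apply: eqp_trans (gcdp_modl g xm) (dvdp_gcd_idl g_dvd).
case/eqpP => [[c1 c2] /andP [/= c1_neq0 c2_neq0] e].
have e' : xm %/ gcdp (modR m g) xm = (c2 / c1) *: h.
  by rewrite mulrC -scalerA -e scalerA mulVf // scale1r.
have c_neq0 : c2 / c1 != 0 by rewrite mulf_neq0 ?invr_eq0.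
by rewrite /perpR e' recipZ // hornerZ scalerA invfM mulrAC mulVf // mul1r.
Qed.

Lemma qp_perpR : qp (perpR m g) = (h.[0])^-1 *: (qp 'X^((size h).-1) * qbar (qp h)).
Proof.
rewrite perpR_cofactor in_qpolyZ qp_recip //.
by apply: contraNneq cofactor_horner0_neq0 => ->; rewrite horner0.
Qed.

Lemma mul_qbar_perpR : qp g * qbar (qp (perpR m g)) = 0.
Proof.
rewrite qp_perpR qbarZ rmorphM qbarK -scalerAr mulrCA -[qp g * _]in_qpolyM.
by rewrite [g * _]mulrC (divpK g_dvd) qp_xm1 !mulr0 scaler0.
Qed.

Lemma qbar_cofactor : exists k : Q, qbar (qp h) = qp (perpR m g) * k.
Proof.
set d := (size h).-1; exists ((h.[0]) *: qp 'X^(m.-1 * d)).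
rewrite qp_perpR -scalerAl -scalerAr scalerA mulVf ?cofactor_horner0_neq0 // scale1r.
rewrite mulrAC -[qp 'X^_ * qp 'X^_]in_qpolyM -exprD -/d qp_Xn_mod -mulSn prednK //.
by rewrite modnMr expr0 rmorph1 mul1r.
Qed.

End Cofactor.

Lemma vecR_qp p p' : qp p = qp p' -> vecR m p = vecR m p'.
Proof. by move/eq_modR_qp => e; rewrite /vecR e. Qed.

Lemma qp_vecR p p' : vecR m p = vecR m p' -> qp p = qp p'.
Proof.
move=> e; apply/val_inj; rewrite [LHS]qpE [RHS]qpE; apply/polyP => j.
have [lt_jm | le_mj] := ltnP j m.
  by have := congr1 (fun w : 'rV[F]_m => w 0 (Ordinal lt_jm)) e; rewrite !mxE.
by rewrite !nth_default // (leq_trans (size_modR _)).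
Qed.

Lemma vecR_surj (w : 'rV[F]_m) : exists p, vecR m p = w.
Proof.
exists (\sum_(i < m) w 0 i *: 'X^i); apply/rowP => j; rewrite mxE -qpE.
rewrite (in_qpoly_small _); last first.
  rewrite mk_monic_xm1 size_xm1 ltnS; apply: (leq_trans (size_sum _ _ _)).
  by apply/bigmax_leqP => i _; rewrite (leq_trans (size_scale_leq _ _)) ?size_polyXn.
rewrite coef_sum (bigD1 j) //= coefZ coefXn eqxx mulr1 big1 ?addr0 // => l ne_lj.
by rewrite coefZ coefXn eq_sym (negbTE (ne_lj : l != j :> nat)) mulr0.
Qed.

Lemma vecRN p : vecR m (- p) = - vecR m p.
Proof. by apply/rowP => i; rewrite !mxE /modR modNp coefN. Qed.

Lemma formE_vecR a1 a2 b1 b2 :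
  formE (vecR m a1, vecR m a2) (vecR m b1, vecR m b2) =
  ((qp a1 * qbar (qp b1) + qp a2 * qbar (qp b2) : Q) : {poly F})`_0.
Proof.
rewrite poly_of_qpolyD coefD !coef0_mul_qbar /formE /=.
by congr (_ + _); apply: eq_bigr => i _; rewrite !mxE -!qpE.
Qed.

Lemma QCcode_vecR u11 u12 u21 u22 a b :
  QCcode u11 u12 u21 u22 (vecR m a, vecR m b) <->
  exists r1 r2 : Q, qp a = r1 * qp u11 + r2 * qp u21 /\ qp b = r1 * qp u12 + r2 * qp u22.
Proof.
split=> [[r1 [r2 [e1 e2]]] | [r1 [r2 [e1 e2]]]].
  by exists (qp r1), (qp r2); rewrite -!in_qpolyM -!in_qpolyD; split; apply: qp_vecR.
exists r1, r2; congr pair; apply: vecR_qp; by rewrite in_qpolyD !in_qpolyM !qp_val.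
Qed.

Lemma QCcode_qp_congr u11 u12 u21 u22 u11' u12' u21' u22' (c : word F m) :
  qp u11 = qp u11' -> qp u12 = qp u12' -> qp u21 = qp u21' -> qp u22 = qp u22' ->
  QCcode u11 u12 u21 u22 c <-> QCcode u11' u12' u21' u22' c.
Proof.
move=> e11 e12 e21 e22; case: c => c1 c2.
have [a <-] := vecR_surj c1; have [b <-] := vecR_surj c2.
by rewrite !QCcode_vecR e11 e12 e21 e22.
Qed.

Lemma dualE_QC_vecR g1 g2 v1 v2 w1 w2 :
  dual (@formE F m) (QCcode g1 (v1 * g1) (v2 * g2) g2) (vecR m w1, vecR m w2) <->
  qp g1 * (qbar (qp w1) + qp v1 * qbar (qp w2)) = 0 /\
  qp g2 * (qp v2 * qbar (qp w1) + qbar (qp w2)) = 0.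
Proof.
set z1 := qp g1 * _; set z2 := qp g2 * _.
have formE_QC r1 r2 :
    formE (vecR m (r1 * g1 + r2 * (v2 * g2)), vecR m (r1 * (v1 * g1) + r2 * g2))
          (vecR m w1, vecR m w2) = ((qp r1 * z1 + qp r2 * z2 : Q) : {poly F})`_0.
  by rewrite formE_vecR !in_qpolyD !in_qpolyM /z1 /z2; congr (polyn _)`_0; ring.
split=> [dual_c | [z1_0 z2_0] _ [r1 [r2 ->]]]; last first.
  by rewrite formE_QC z1_0 z2_0 !mulr0 addr0 coef0.
split; apply: coef0_mul_eq0 => r.
  by have := dual_c _ (ex_intro _ (r : {poly F}) (ex_intro _ 0 erefl));
    rewrite formE_QC qp_val rmorph0 mul0r addr0.
by have := dual_c _ (ex_intro _ 0 (ex_intro _ (r : {poly F}) erefl));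
  rewrite formE_QC qp_val rmorph0 mul0r add0r.
Qed.

Section EuclideanDual.
Variables g1 g2 v1 v2 : {poly F}.
Hypotheses (g1_monic : g1 \is monic) (g2_monic : g2 \is monic).
Hypotheses (g1_dvd : g1 %| xm) (g2_dvd : g2 %| xm).

Local Notation P1 := (qp (perpR m g1)).
Local Notation P2 := (qp (perpR m g2)).
Local Notation V1 := (qp v1).
Local Notation V2 := (qp v2).

Lemma perp_code_dual_eqs (r1 r2 : Q) :
  let W1 := r1 * P1 + r2 * (- qbar V1 * P2) in
  let W2 := r1 * (- qbar V2 * P1) + r2 * P2 in
  qp g1 * (qbar W1 + V1 * qbar W2) = 0 /\ qp g2 * (V2 * qbar W1 + qbar W2) = 0.
Proof.
move=> W1 W2; rewrite /W1 /W2 !rmorphD !rmorphM !rmorphN !qbarK.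
have g1P1 := mul_qbar_perpR g1_dvd; have g2P2 := mul_qbar_perpR g2_dvd.
split.
  transitivity ((1 - V1 * V2) * qbar r1 * (qp g1 * qbar P1)); first by ring.
  by rewrite g1P1 mulr0.
transitivity ((1 - V1 * V2) * qbar r2 * (qp g2 * qbar P2)); first by ring.
by rewrite g2P2 mulr0.
Qed.

Hypothesis v1v2_coprime : coprimep (v1 * v2 - 1) xm.

Lemma dual_eqs_perp_code (W1 W2 : Q) :
  qp g1 * (qbar W1 + V1 * qbar W2) = 0 -> qp g2 * (V2 * qbar W1 + qbar W2) = 0 ->
  exists r1 r2 : Q,
    W1 = r1 * P1 + r2 * (- qbar V1 * P2) /\ W2 = r1 * (- qbar V2 * P1) + r2 * P2.
Proof.
move=> /(qp_mul_eq0_cofactor g1_monic g1_dvd) [t1 e1].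
move=> /(qp_mul_eq0_cofactor g2_monic g2_dvd) [t2 e2].
have [k1 ek1] := qbar_cofactor g1_dvd; have [k2 ek2] := qbar_cofactor g2_dvd.
set U := V1 * V2 - 1.
have U_unit : U \is a GRing.unit.
  by rewrite /U -rmorphM -(rmorph1 qp) -rmorphB; apply: qp_unit_coprime.
have eW1 : qbar W1 = U^-1 * (V1 * (qp (xm %/ g2) * t2) - qp (xm %/ g1) * t1).
  by rewrite -e1 -e2 -[LHS](mulKr U_unit) /U; congr (_ * _); ring.
have eW2 : qbar W2 = U^-1 * (V2 * (qp (xm %/ g1) * t1) - qp (xm %/ g2) * t2).
  by rewrite -e1 -e2 -[LHS](mulKr U_unit) /U; congr (_ * _); ring.
exists (- (qbar U^-1 * qbar t1 * k1)), (- (qbar U^-1 * qbar t2 * k2)).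
split; [rewrite -[W1]qbarK eW1 | rewrite -[W2]qbarK eW2];
  by rewrite !rmorphM rmorphB !rmorphM ek1 ek2; ring.
Qed.

Theorem euclidean_dual_QC (c : word F m) :
  dual (@formE F m) (QCcode g1 (v1 * g1) (v2 * g2) g2) c <->
  QCcode (perpR m g1) (- barR m v2 * perpR m g1)
         (- barR m v1 * perpR m g2) (perpR m g2) c.
Proof.
case: c => c1 c2; have [w1 <-] := vecR_surj c1; have [w2 <-] := vecR_surj c2.
rewrite dualE_QC_vecR QCcode_vecR !in_qpolyM !raddfN /= !qp_barR.
split=> [[]|[r1 [r2 [-> ->]]]]; first exact: dual_eqs_perp_code.
exact: perp_code_dual_eqs.
Qed.

Theorem symplectic_dual_QC (c : word F m) :
  dual (@formS F m) (QCcode g1 (v1 * g1) (v2 * g2) g2) c <->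
  QCcode (perpR m g2) (barR m v1 * perpR m g2)
         (barR m v2 * perpR m g1) (perpR m g1) c.
Proof.
case: c => c1 c2.
have -> : dual (@formS F m) (QCcode g1 (v1 * g1) (v2 * g2) g2) (c1, c2) <->
          dual (@formE F m) (QCcode g1 (v1 * g1) (v2 * g2) g2) (c2, - c1).
  have formS_E u : formS u (c1, c2) = formE u (c2, - c1).
    rewrite /formS /formE -big_split /=; apply: eq_bigr => i _.
    by rewrite mxE mulrN.
  by split=> dual_c u Cu; [rewrite -formS_E | rewrite formS_E]; apply: dual_c.
rewrite euclidean_dual_QC.
have [w1 <-] := vecR_surj c1; have [w2 <-] := vecR_surj c2.
rewrite -vecRN !QCcode_vecR !in_qpolyM !raddfN /=.
split=> [[r1 [r2 [e2 e1]]] | [r1 [r2 [e1 e2]]]].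
  by exists (- r2), r1; rewrite -[qp w1]opprK e1 e2; split; ring.
by exists r2, (- r1); rewrite e1 e2; split; ring.
Qed.

End EuclideanDual.

End QuotientRing.

Section HermitianDual.
Variables (F : finFieldType) (q m : nat).
Hypotheses (cardF : #|F| = (q ^ 2)%N) (m_gt0 : (0 < m)%N).

Local Notation xm := (xm1 F m).
Local Notation qp := (in_qpoly xm).
Local Notation Phi := (map_poly (frobq_rmorphism cardF)).
Implicit Types p : {poly F}.

Lemma map_frobqK : involutive Phi.
Proof. by move=> p; apply/polyP => i; rewrite !coef_map /= frobqK. Qed.

Lemma map_frobq_xm1 : Phi xm = xm.
Proof. by rewrite /xm1 rmorphB rmorph1; congr (_ - _); apply: map_polyXn. Qed.

Lemma map_frobq_modR p : Phi (modR m p) = modR m (Phi p).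
Proof. by rewrite /modR map_modp map_frobq_xm1. Qed.

Lemma qp_map_frobq_congr p p' : qp p = qp p' -> qp (Phi p) = qp (Phi p').
Proof.
move/(eq_modR_qp m_gt0) => e.
by rewrite -qp_modR // -map_frobq_modR e map_frobq_modR qp_modR.
Qed.

Lemma formH_vecR a1 a2 (c : word F m) :
  formH q (vecR m a1, vecR m a2) c = formE (vecR m (Phi a1), vecR m (Phi a2)) c.
Proof.
by rewrite /formH /formE /=; congr (_ + _); apply: eq_bigr => i _;
  rewrite !mxE -map_frobq_modR coef_map.
Qed.

Lemma dualH_dualE_map_frobq g1 g2 v1 v2 (c : word F m) :
  dual (@formH F m q) (QCcode g1 (v1 * g1) (v2 * g2) g2) c <->
  dual (@formE F m) (QCcode (Phi g1) (Phi v1 * Phi g1) (Phi v2 * Phi g2) (Phi g2)) c.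
Proof.
split=> dual_c _ [r1 [r2 ->]].
  have := dual_c _ (ex_intro _ (Phi r1) (ex_intro _ (Phi r2) erefl)).
  by rewrite formH_vecR !(rmorphD, rmorphM) /= !map_frobqK.
rewrite formH_vecR; apply: dual_c; exists (Phi r1), (Phi r2).
by rewrite !(rmorphD, rmorphM).
Qed.

Lemma perpHR_map_frobq g : perpHR m q g = perpR m (Phi g).
Proof.
rewrite /perpHR /perpR /frobR.
rewrite -[modR m (Phi (modR m g))]map_frobq_modR /modR modp_id.
by rewrite -/(modR m g) map_frobq_modR.
Qed.

Lemma qp_frobR_barR v : qp (frobR m q (barR m v)) = qp (barR m (Phi v)).
Proof.
rewrite /frobR map_frobq_modR qp_modR // (qp_barR m_gt0) qbar_qp.
rewrite -[X in _ \Po X](map_polyXn (frobq_rmorphism cardF)) -map_comp_poly.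
apply: qp_map_frobq_congr.
by rewrite (qp_barR m_gt0) qbar_qp.
Qed.

Theorem hermitian_dual_QC g1 g2 v1 v2 :
  g1 \is monic -> g2 \is monic -> g1 %| xm -> g2 %| xm ->
  coprimep (v1 * v2 - 1) xm ->
  forall c : word F m,
    dual (@formH F m q) (QCcode g1 (v1 * g1) (v2 * g2) g2) c <->
    QCcode (perpHR m q g1) (- frobR m q (barR m v2) * perpHR m q g1)
           (- frobR m q (barR m v1) * perpHR m q g2) (perpHR m q g2) c.
Proof.
move=> g1_monic g2_monic g1_dvd g2_dvd cop c.
rewrite dualH_dualE_map_frobq euclidean_dual_QC ?map_monic //; first last.
- by rewrite -map_frobq_xm1 -(rmorph1 Phi) -rmorphM -rmorphB coprimep_map.
- by rewrite -map_frobq_xm1 dvdp_map.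
- by rewrite -map_frobq_xm1 dvdp_map.
rewrite !perpHR_map_frobq; apply: QCcode_qp_congr => //;
  by rewrite !in_qpolyM !raddfN /= qp_frobR_barR.
Qed.

End HermitianDual.

Theorem mainTheorem5 :
  (* (A) Euclidean dual over F_q *)
  (forall (F : finFieldType) (m : nat) (g1 g2 v1 v2 : {poly F}),
     (0 < m)%N ->
     g1 \is monic -> g2 \is monic ->
     g1 %| xm1 F m -> g2 %| xm1 F m ->
     (size v1 <= m)%N -> (size v2 <= m)%N ->
     coprimep (v1 * v2 - 1) (xm1 F m) ->
     forall c : word F m,
       dual (@formE F m) (QCcode g1 (v1 * g1) (v2 * g2) g2) c <->
       QCcode (perpR m g1) (- barR m v2 * perpR m g1)
              (- barR m v1 * perpR m g2) (perpR m g2) c)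
  /\
  (* (B) Hermitian dual over F_{q^2} *)
  (forall (F : finFieldType) (q m : nat) (g1 g2 v1 v2 : {poly F}),
     #|F| = (q ^ 2)%N ->
     (0 < m)%N ->
     g1 \is monic -> g2 \is monic ->
     g1 %| xm1 F m -> g2 %| xm1 F m ->
     (size v1 <= m)%N -> (size v2 <= m)%N ->
     coprimep (v1 * v2 - 1) (xm1 F m) ->
     forall c : word F m,
       dual (@formH F m q) (QCcode g1 (v1 * g1) (v2 * g2) g2) c <->
       QCcode (perpHR m q g1) (- frobR m q (barR m v2) * perpHR m q g1)
              (- frobR m q (barR m v1) * perpHR m q g2) (perpHR m q g2) c)
  /\
  (* (C) symplectic dual over F_q *)
  (forall (F : finFieldType) (m : nat) (g1 g2 v1 v2 : {poly F}),
     (0 < m)%N ->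
     g1 \is monic -> g2 \is monic ->
     g1 %| xm1 F m -> g2 %| xm1 F m ->
     (size v1 <= m)%N -> (size v2 <= m)%N ->
     coprimep (v1 * v2 - 1) (xm1 F m) ->
     forall c : word F m,
       dual (@formS F m) (QCcode g1 (v1 * g1) (v2 * g2) g2) c <->
       QCcode (perpR m g2) (barR m v1 * perpR m g2)
              (barR m v2 * perpR m g1) (perpR m g1) c).
Proof.
(* The degree bounds on v1, v2 are unused: only their residues matter. *)
split; [|split].
- move=> F m g1 g2 v1 v2 m_gt0 g1_monic g2_monic g1_dvd g2_dvd _ _ cop c.
  exact: euclidean_dual_QC.
- move=> F q m g1 g2 v1 v2 cardF m_gt0 g1_monic g2_monic g1_dvd g2_dvd _ _ cop c.
  exact: hermitian_dual_QC.
- move=> F m g1 g2 v1 v2 m_gt0 g1_monic g2_monic g1_dvd g2_dvd _ _ cop c.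
  exact: symplectic_dual_QC.
Qed.
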